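(* Let $\Lambda=(W_j,\Lambda_j,v_j)_{j\in\mathbb{J}}$ be a g-fusion frame for $H$ with g-fusion frame operator $S_\Lambda$, let $\mathbb{I}\subseteq\mathbb{J}$, $\mathbb{I}^c=\mathbb{J}\setminus\mathbb{I}$, and for $\mathbb{K}\subseteq\mathbb{J}$ set $S_{\mathbb{K}}f:=\sum_{j\in\mathbb{K}}v_j^2\pi_{W_j}\Lambda_j^*\Lambda_j\pi_{W_j}f$. Then for every $f\in H$, $$\sum_{j\in\mathbb{I}}v_j^2\Vert\Lambda_j\pi_{W_j}f\Vert^2+\Vert S_{\Lambda}^{-\frac{1}{2}}S_{\mathbb{I}^c}f\Vert^2=\sum_{j\in\mathbb{I}^c}v_j^2\Vert\Lambda_j\pi_{W_j}f\Vert^2+\Vert S_{\Lambda}^{-\frac{1}{2}}S_{\mathbb{I}}f\Vert^2.$$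
   Context: $H$ is a separable Hilbert space, $\mathbb{J}\subseteq\mathbb{Z}$, $\{H_j\}_{j\in\mathbb{J}}$ are separable Hilbert spaces, $\Lambda_j\in\mathcal{B}(H,H_j)$, $W_j$ are closed subspaces of $H$, $v_j>0$, and $\pi_V$ denotes the orthogonal projection onto a closed subspace $V$. The triple $\Lambda=(W_j,\Lambda_j,v_j)$ is a g-fusion frame for $H$ if there exist $0<A\le B<\infty$ with $A\Vert f\Vert^2\le\sum_{j\in\mathbb{J}}v_j^2\Vert\Lambda_j\pi_{W_j}f\Vert^2\le B\Vert f\Vert^2$ for all $f\in H$. Its g-fusion frame operator $S_\Lambda f=\sum_{j\in\mathbb{J}}v_j^2\pi_{W_j}\Lambda_j^*\Lambda_j\pi_{W_j}f$ is bounded, positive and invertible, and $S_\Lambda^{-1/2}$ is the inverse of its positive square root. *)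

From HB Require Import structures.
From mathcomp Require Import all_boot all_order all_algebra.
From mathcomp Require Import reals.
From mathcomp Require Import complex.
From Stdlib Require Import ClassicalEpsilon.

Set Implicit Arguments.
Unset Strict Implicit.
Unset Printing Implicit Defensive.

Import Order.TTheory GRing.Theory Num.Theory.
Local Open Scope ring_scope.

Section Hilbert.
Variable R : realType.
Local Notation C := (complex R).

Section Space.
Variable V : lmodType C.
Variable ip : V -> V -> C.

Definition is_inner_product : Prop :=
  [/\ forall (a : C) (x y z : V), ip (a *: x + y) z = a * ip x z + ip y z,
      forall x y : V, ip y x = conjc (ip x y),
      forall x : V, 0 <= ip x x
    & forall x : V, ip x x = 0 -> x = 0].

Definition hnorm (x : V) : R := Num.sqrt (complex.Re (ip x x)).

Definition cauchy_seq (u : nat -> V) : Prop :=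
  forall e : R, 0 < e -> exists N : nat, forall m n : nat,
    (N <= m)%N -> (N <= n)%N -> hnorm (u m - u n) < e.

Definition seq_converges_to (u : nat -> V) (l : V) : Prop :=
  forall e : R, 0 < e -> exists N : nat, forall n : nat,
    (N <= n)%N -> hnorm (u n - l) < e.

Definition complete_space : Prop :=
  forall u : nat -> V, cauchy_seq u -> exists l : V, seq_converges_to u l.

Definition separable_space : Prop :=
  exists d : nat -> V, forall (x : V) (e : R), 0 < e ->
    exists n : nat, hnorm (x - d n) < e.

Definition separable_hilbert : Prop :=
  [/\ is_inner_product, complete_space & separable_space].

Definition closed_subspace (W : V -> Prop) : Prop :=
  [/\ W 0,
      forall (a : C) (x y : V), W x -> W y -> W (a *: x + y)
    & forall (u : nat -> V) (l : V),
        (forall n, W (u n)) -> seq_converges_to u l -> W l].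

Definition is_orth_proj (W : V -> Prop) (P : V -> V) : Prop :=
  forall f : V, W (P f) /\ (forall w : V, W w -> ip (f - P f) w = 0).

(* unconditional convergence of a family indexed by K ⊆ Z:
   the net of finite partial sums over finite subsets of K converges *)
Definition has_sumV (K : int -> Prop) (u : int -> V) (s : V) : Prop :=
  forall e : R, 0 < e -> exists F0 : seq int,
    (forall j, j \in F0 -> K j) /\
    forall F : seq int, uniq F -> (forall j, j \in F -> K j) ->
      {subset F0 <= F} -> hnorm (\sum_(j <- F) u j - s) < e.

(* the sum \sum_{j in K} u j (0 if the family is not summable) *)
Definition sumV (K : int -> Prop) (u : int -> V) : V :=
  match excluded_middle_informative (exists s, has_sumV K u s) with
  | left h => proj1_sig (constructive_indefinite_description _ h)
  | right _ => 0
  end.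

Definition positive_op (Q : V -> V) : Prop :=
  forall x : V, 0 <= ip (Q x) x.
End Space.

Definition bounded_linear (V1 V2 : lmodType C) (ip1 : V1 -> V1 -> C)
    (ip2 : V2 -> V2 -> C) (T : V1 -> V2) : Prop :=
  [/\ forall (a : C) (x y : V1), T (a *: x + y) = a *: T x + T y
    & exists M : R, forall x : V1, hnorm ip2 (T x) <= M * hnorm ip1 x].

Definition is_adjoint (V1 V2 : lmodType C) (ip1 : V1 -> V1 -> C)
    (ip2 : V2 -> V2 -> C) (T : V1 -> V2) (Ts : V2 -> V1) : Prop :=
  forall (x : V1) (y : V2), ip2 (T x) y = ip1 x (Ts y).

Definition has_sumR (K : int -> Prop) (a : int -> R) (s : R) : Prop :=
  forall e : R, 0 < e -> exists F0 : seq int,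
    (forall j, j \in F0 -> K j) /\
    forall F : seq int, uniq F -> (forall j, j \in F -> K j) ->
      {subset F0 <= F} -> `|\sum_(j <- F) a j - s| < e.

Definition sumR (K : int -> Prop) (a : int -> R) : R :=
  match excluded_middle_informative (exists s, has_sumR K a s) with
  | left h => proj1_sig (constructive_indefinite_description _ h)
  | right _ => 0
  end.

Section GFusion.
Variable H : lmodType C.
Variable ipH : H -> H -> C.
Variable Hj : int -> lmodType C.
Variable ipj : forall j, Hj j -> Hj j -> C.
Variable J : int -> Prop.
Variable P : int -> H -> H.            (* P j = pi_{W_j} *)
Variable L : forall j, H -> Hj j.      (* L j = Lambda_j *)
Variable Ls : forall j, Hj j -> H.     (* Ls j = Lambda_j^* *)
Variable v : int -> R.

Definition gfusion_frame : Prop :=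
  exists A B : R, 0 < A /\ A <= B /\
    forall f : H, exists s : R,
      has_sumR J (fun j => v j ^+ 2 * hnorm (@ipj j) (L j (P j f)) ^+ 2) s
      /\ A * hnorm ipH f ^+ 2 <= s /\ s <= B * hnorm ipH f ^+ 2.

Definition S_K (K : int -> Prop) (f : H) : H :=
  sumV ipH K (fun j => ((v j ^+ 2)%:C)%C *: P j (@Ls j (L j (P j f)))).
End GFusion.

End Hilbert.

(* Write S = S_Lambda and Q = S^(1/2).  The sums over I and I^c split S f as
   S_I f + S_{I^c} f, so with p := Q^-1 S_I f and q := Q^-1 S_{I^c} f we get
   Q f = Q^-1 S f = p + q.  Since Q is self-adjoint,
     sum_{j in I} v_j^2 ||Lambda_j pi_j f||^2 = Re <S_I f, f> = Re <Q p, f>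
                                               = Re <p, Q f> = ||p||^2 + Re <p, q>,
   and symmetrically for I^c; both sides of the identity therefore equal
   ||p||^2 + ||q||^2 + Re <p, q>.
   The analytic content is the existence of the sums.  Convergence over J
   follows from the injectivity of S (a divergent sum takes the value 0, so
   the frame bounds are not needed), and convergence over subsets of J from
   the Cauchy criterion for unconditional sums in the complete space H. *)

From HB Require Import structures.
From mathcomp Require Import all_boot all_order all_algebra.
From mathcomp Require Import reals complex.
From mathcomp Require Import ring lra.
From mathcomp Require Import boolp.
From Stdlib Require Import ClassicalEpsilon.

Set Implicit Arguments.
Unset Strict Implicit.
Unset Printing Implicit Defensive.

Import Order.TTheory GRing.Theory Num.Theory.
Local Open Scope ring_scope.

Section InnerProduct.
Variable R : realType.
Local Notation C := (complex R).
Variables (V : lmodType C) (ip : V -> V -> C).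
Hypothesis hip : is_inner_product ip.

Lemma ipDZl a x y z : ip (a *: x + y) z = a * ip x z + ip y z.
Proof. by case: hip. Qed.

Lemma ipC x y : ip y x = conjc (ip x y).
Proof. by case: hip. Qed.

Lemma ip_ge0 x : 0 <= ip x x.
Proof. by case: hip. Qed.

Lemma ip_eq0 x : ip x x = 0 -> x = 0.
Proof. by case: hip => _ _ _ h; apply: h. Qed.

Lemma ipDl x y z : ip (x + y) z = ip x z + ip y z.
Proof. by rewrite -[x]scale1r ipDZl mul1r scale1r. Qed.

Lemma ip0l z : ip 0 z = 0.
Proof. by apply: (@addrI _ (ip 0 z)); rewrite -ipDl !addr0. Qed.

Lemma ipZl a x z : ip (a *: x) z = a * ip x z.
Proof. by rewrite -[a *: x]addr0 ipDZl ip0l addr0. Qed.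

Lemma ipNl x z : ip (- x) z = - ip x z.
Proof. by rewrite -scaleN1r ipZl mulN1r. Qed.

Lemma ipBl x y z : ip (x - y) z = ip x z - ip y z.
Proof. by rewrite ipDl ipNl. Qed.

Lemma ipDr x y z : ip z (x + y) = ip z x + ip z y.
Proof. by rewrite ipC ipDl rmorphD (ipC x z) (ipC y z). Qed.

Lemma ipZr a x z : ip z (a *: x) = conjc a * ip z x.
Proof. by rewrite ipC ipZl rmorphM (ipC x z). Qed.

Lemma ip0r z : ip z 0 = 0.
Proof. by rewrite ipC ip0l rmorph0. Qed.

Lemma ipNr x z : ip z (- x) = - ip z x.
Proof. by rewrite ipC ipNl rmorphN (ipC x z). Qed.

Lemma ipBr x y z : ip z (x - y) = ip z x - ip z y.
Proof. by rewrite ipDr ipNr. Qed.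

Lemma ip_suml (I : Type) (F : seq I) (u : I -> V) z :
  ip (\sum_(j <- F) u j) z = \sum_(j <- F) ip (u j) z.
Proof. by elim: F => [|a F IH]; rewrite ?big_nil ?ip0l // !big_cons ipDl IH. Qed.

Lemma Re_ipC x y : complex.Re (ip x y) = complex.Re (ip y x).
Proof. by rewrite (ipC y x); case: (ip y x). Qed.

Lemma hnorm_ge0 x : 0 <= hnorm ip x.
Proof. exact: sqrtr_ge0. Qed.

Lemma hnorm_sqr x : hnorm ip x ^+ 2 = complex.Re (ip x x).
Proof. by rewrite sqr_sqrtr //; have := ip_ge0 x; rewrite lecE => /andP[]. Qed.

Lemma ipxxE x : ip x x = ((hnorm ip x ^+ 2)%:C)%C.
Proof.
by rewrite hnorm_sqr; move: (ger0_Im (ip_ge0 x)); case: (ip x x) => a b /= ->.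
Qed.

Lemma hnorm_eq0 x : hnorm ip x = 0 -> x = 0.
Proof. by move=> x0; apply: ip_eq0; rewrite ipxxE x0 expr0n. Qed.

Lemma hnorm0 : hnorm ip 0 = 0.
Proof. by rewrite /hnorm ip0l sqrtr0. Qed.

Lemma hnormN x : hnorm ip (- x) = hnorm ip x.
Proof. by rewrite /hnorm ipNl ipNr opprK. Qed.

Lemma hnormB x y : hnorm ip (x - y) = hnorm ip (y - x).
Proof. by rewrite -hnormN opprB. Qed.

Lemma hnorm_gt0 x : x != 0 -> 0 < hnorm ip x.
Proof.
by move=> x0; rewrite lt_def hnorm_ge0 andbT; apply: contra_neq x0; apply: hnorm_eq0.
Qed.

Lemma Re_ip_le_hnormM x y : complex.Re (ip x y) <= hnorm ip x * hnorm ip y.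
Proof.
have [->|/hnorm_gt0 a_gt0] := eqVneq x 0; first by rewrite ip0l hnorm0 mul0r.
have [->|/hnorm_gt0 b_gt0] := eqVneq y 0; first by rewrite ip0r hnorm0 mulr0.
have Re_realM (r : R) (w : C) : complex.Re ((r%:C)%C * w) = r * complex.Re w.
  by case: w => u w /=; rewrite mul0r subr0.
(* 0 <= ||b x - a y||^2 = 2 a b (a b - Re <x, y>) for a = ||x||, b = ||y||. *)
have := sqr_ge0 (hnorm ip ((hnorm ip y)%:C%C *: x - (hnorm ip x)%:C%C *: y)).
rewrite hnorm_sqr ipBl !ipBr !ipZl !ipZr !conjc_real !raddfB /= !Re_realM.
rewrite (Re_ipC y x) -!hnorm_sqr.
set a := hnorm ip x; set b := hnorm ip y; set c := complex.Re _ => ge0.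
have ab2_gt0 : 0 < 2 * (a * b) by rewrite mulr_gt0 ?mulr_gt0.
rewrite -subr_ge0 -(pmulr_rge0 _ ab2_gt0).
by move: ge0; congr (_ <= _); ring.
Qed.

Lemma normr_Re_ip_le_hnormM x y : `|complex.Re (ip x y)| <= hnorm ip x * hnorm ip y.
Proof.
rewrite ler_norml Re_ip_le_hnormM andbT lerNl -raddfN /= -ipNl -(hnormN x).
exact: Re_ip_le_hnormM.
Qed.

Lemma ler_hnormD x y : hnorm ip (x + y) <= hnorm ip x + hnorm ip y.
Proof.
rewrite -ler_sqr ?nnegrE ?addr_ge0 ?hnorm_ge0 // sqrrD !hnorm_sqr.
rewrite ipDl !ipDr !raddfD /= (Re_ipC y x).
have := Re_ip_le_hnormM x y; lra.
Qed.

Lemma hnormD_lt_split x y e :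
  hnorm ip x < e / 2 -> hnorm ip y < e / 2 -> hnorm ip (x + y) < e.
Proof. by move=> hx hy; rewrite (le_lt_trans (ler_hnormD x y)) // [e]splitr ltrD. Qed.

Lemma hnorm_lt_eq0 x : (forall e, 0 < e -> hnorm ip x < e) -> x = 0.
Proof.
move=> small; have [->//|/hnorm_gt0 x_gt0] := eqVneq x 0.
by have := small _ x_gt0; rewrite ltxx.
Qed.

End InnerProduct.

Lemma common_refinement (T : eqType) (K : T -> Prop) (F1 F2 : seq T) :
  (forall j, j \in F1 -> K j) -> (forall j, j \in F2 -> K j) ->
  exists F : seq T, [/\ uniq F, forall j, j \in F -> K j,
                        {subset F1 <= F} & {subset F2 <= F}].
Proof.
move=> K1 K2; exists (undup (F1 ++ F2)); split => [|j|j|j]; rewrite ?undup_uniq //.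
- by rewrite mem_undup mem_cat => /orP[/K1|/K2].
- by rewrite mem_undup mem_cat => ->.
- by rewrite mem_undup mem_cat => ->; rewrite orbT.
Qed.

Lemma exists_inv_natS_lt (R : archiRealFieldType) (e : R) :
  0 < e -> exists N : nat, (N.+1%:R)^-1 < e.
Proof.
move=> e_gt0; exists (Num.bound e^-1).
rewrite invf_plt ?posrE ?ltr0Sn //; apply: lt_trans (archi_boundP _) _.
  by rewrite ltW ?invr_gt0.
by rewrite ltr_nat.
Qed.

Section UnconditionalSums.
Variable R : realType.
Local Notation C := (complex R).
Variables (V : lmodType C) (ip : V -> V -> C).
Hypothesis hip : is_inner_product ip.

Lemma has_sumV_unique K (u : int -> V) s1 s2 :
  has_sumV ip K u s1 -> has_sumV ip K u s2 -> s1 = s2.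
Proof.
move=> h1 h2; apply/eqP; rewrite -subr_eq0; apply/eqP.
apply: (hnorm_lt_eq0 hip) => e e_gt0; have e2_gt0 : 0 < e / 2 by rewrite divr_gt0.
have [F1 [K1 H1]] := h1 _ e2_gt0; have [F2 [K2 H2]] := h2 _ e2_gt0.
have [F [uF KF sF1 sF2]] := common_refinement K1 K2.
rewrite -(subrK (\sum_(j <- F) u j) s1) -addrA (hnormD_lt_split hip) //.
  by rewrite (hnormB hip) H1.
exact: H2.
Qed.

Lemma sumV_eq K (u : int -> V) s : has_sumV ip K u s -> sumV ip K u = s.
Proof.
move=> hs; rewrite /sumV; case: excluded_middle_informative => [ex|]; last first.
  by case; exists s.
by case: constructive_indefinite_description => t ht /=; apply: has_sumV_unique ht hs.
Qed.

Lemma sumV_not_summable K (u : int -> V) :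
  ~ (exists s, has_sumV ip K u s) -> sumV ip K u = 0.
Proof. by rewrite /sumV; case: excluded_middle_informative. Qed.

Lemma has_sumV_eq0 K (u : int -> V) :
  (forall j, K j -> u j = 0) -> has_sumV ip K u 0.
Proof.
move=> u0 e e_gt0; exists [::]; split => // F _ KF _.
by rewrite big_seq big1 => [|j /KF/u0]; rewrite ?subr0 ?(hnorm0 hip).
Qed.

Lemma has_sumV_union (J I1 I2 : int -> Prop) (u : int -> V) a b :
  (forall j, J j <-> I1 j \/ I2 j) -> (forall j, I1 j -> ~ I2 j) ->
  has_sumV ip I1 u a -> has_sumV ip I2 u b -> has_sumV ip J u (a + b).
Proof.
move=> J_eq disj h1 h2 e e_gt0; have e2_gt0 : 0 < e / 2 by rewrite divr_gt0.
have [F1 [K1 H1]] := h1 _ e2_gt0; have [F2 [K2 H2]] := h2 _ e2_gt0.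
exists (F1 ++ F2); split.
  by move=> j; rewrite mem_cat => /orP[/K1|/K2] ?; apply/J_eq; [left|right].
move=> F uF KF sF; rewrite (bigID (fun j => `[< I1 j >])) /= opprD addrACA.
rewrite -[\sum_(j <- F | `[< _ >]) _]big_filter -[\sum_(j <- F | ~~ _) _]big_filter.
apply: hnormD_lt_split => //; [apply: H1 | apply: H2]; rewrite ?filter_uniq //.
- by move=> j; rewrite mem_filter => /andP[/asboolP].
- by move=> j hj; rewrite mem_filter sF ?mem_cat ?hj // andbT; apply/asboolP/K1.
- move=> j; rewrite mem_filter => /andP[/asboolP I1j /KF/J_eq[]//].
- move=> j hj; rewrite mem_filter sF ?mem_cat ?hj ?orbT // andbT.
  by apply/asboolP => /disj; apply; apply: K2.
Qed.

Definition small_tail (K : int -> Prop) (u : int -> V) (e : R) (D : seq int) :=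
  forall G : seq int, uniq G -> (forall j, j \in G -> K j) ->
    (forall j, j \in G -> j \notin D) -> hnorm ip (\sum_(j <- G) u j) < e.

Lemma has_sumV_small_tail (J I : int -> Prop) (u : int -> V) s e :
  (forall j, I j -> J j) -> has_sumV ip J u s -> 0 < e ->
  exists2 D, (forall j, j \in D -> I j) & small_tail I u e D.
Proof.
move=> IJ hs e_gt0; have e2_gt0 : 0 < e / 2 by rewrite divr_gt0.
have [F0 [K0 H0]] := hs _ e2_gt0.
exists [seq j <- undup F0 | `[< I j >]].
  by move=> j; rewrite mem_filter => /andP[/asboolP].
move=> G uG KG disjG.
have uF0G : uniq (undup F0 ++ G).
  rewrite cat_uniq undup_uniq uG andbT /=; apply/hasPn => j /[dup] Gj /disjG.
  by rewrite mem_filter; apply: contra => ->; rewrite andbT; apply/asboolP/KG.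
have K0' j : j \in undup F0 -> J j by rewrite mem_undup => /K0.
rewrite -[\sum_(j <- G) _](addKr (\sum_(j <- undup F0) u j)) -big_cat /= addrC.
rewrite -(subrK s (\sum_(j <- _ ++ _) u j)) -addrA (hnormD_lt_split hip) //; last first.
  rewrite -opprB (hnormN hip); apply: H0; rewrite ?undup_uniq // => j.
  by rewrite mem_undup.
apply: H0 => // [j|j]; rewrite mem_cat; last by rewrite mem_undup => ->.
by case/orP=> [/K0'|/KG/IJ].
Qed.

Lemma small_tail_sub K (u : int -> V) e D D' F :
  small_tail K u e D -> uniq F -> uniq D' -> (forall j, j \in F -> K j) ->
  {subset D' <= F} -> {subset D <= D'} ->
  hnorm ip (\sum_(j <- F) u j - \sum_(j <- D') u j) < e.
Proof.
move=> tail uF uD' KF sD'F sDD'.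
have permD' : perm_eq [seq j <- F | j \in D'] D'.
  apply: uniq_perm; rewrite ?filter_uniq // => j; rewrite mem_filter.
  by case D'j: (j \in D') => //=; apply: sD'F.
rewrite (bigID (fun j => j \in D')) /= -big_filter (perm_big _ permD').
rewrite addrAC subrr add0r -big_filter.
apply: tail; rewrite ?filter_uniq // => j; rewrite mem_filter => /andP[D'j Fj] //.
  exact: KF.
by apply: contra D'j; apply: sDD'.
Qed.

Lemma has_sumV_sub (J I : int -> Prop) (u : int -> V) s :
  complete_space ip -> (forall j, I j -> J j) -> has_sumV ip J u s ->
  exists t, has_sumV ip I u t.
Proof.
move=> hcomp IJ hs.
have /choice[d /all_and2[dI dtail]] : forall n : nat, exists D,
    (forall j, j \in D -> I j) /\ small_tail I u (n.+1%:R)^-1 D.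
  move=> n; have [|D DI tail] := has_sumV_small_tail (e := (n.+1%:R)^-1) IJ hs.
    by rewrite invr_gt0 ltr0Sn.
  by exists D.
pose E n := undup (flatten [seq d k | k <- iota 0 n.+1]).
have mem_E n j : reflect (exists2 k, (k <= n)%N & j \in d k) (j \in E n).
  rewrite mem_undup; apply: (iffP flattenP) => [[_ /mapP[k + ->] djk]|[k kn djk]].
    by rewrite mem_iota ltnS => kn; exists k.
  by exists (d k) => //; apply: map_f; rewrite mem_iota ltnS.
have E_I n j : j \in E n -> I j by case/mem_E => k _ /dI.
have E_mono m n : (m <= n)%N -> {subset E m <= E n}.
  by move=> mn j /mem_E[k km djk]; apply/mem_E; exists k => //; apply: leq_trans mn.
have close N n F : (N <= n)%N -> uniq F -> (forall j, j \in F -> I j) ->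
    {subset E n <= F} ->
    hnorm ip (\sum_(j <- F) u j - \sum_(j <- E n) u j) < (N.+1%:R)^-1.
  move=> Nn uF FI sEF; apply: small_tail_sub (dtail N) _ _ _ _ _ => //.
    exact: undup_uniq.
  by move=> j djN; apply/mem_E; exists N.
have cauchy : cauchy_seq ip (fun n => \sum_(j <- E n) u j).
  move=> e /exists_inv_natS_lt[N hN]; exists N => m n.
  wlog nm : m n / (n <= m)%N => [hwlog Nm Nn|Nm Nn].
    by case/orP: (leq_total n m) => /hwlog; [apply | rewrite (hnormB hip); apply].
  apply: lt_trans hN; apply: close Nn _ _ _; rewrite ?undup_uniq //;
  by [apply: E_I | apply: E_mono].
have [l hl] := hcomp _ cauchy.
exists l => e e_gt0; have e2_gt0 : 0 < e / 2 by rewrite divr_gt0.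
have [N1 hN1] := exists_inv_natS_lt e2_gt0; have [N2 hN2] := hl _ e2_gt0.
exists (E (maxn N1 N2)); split => [|F uF FI sEF]; first exact: E_I.
rewrite -(subrK (\sum_(j <- E (maxn N1 N2)) u j) (\sum_(j <- F) u j)) -addrA.
rewrite (hnormD_lt_split hip) ?hN2 ?leq_maxr //.
by apply: lt_trans hN1; apply: close; rewrite ?leq_maxl.
Qed.

End UnconditionalSums.

Lemma has_sumR_unique (R : realType) K (a : int -> R) s1 s2 :
  has_sumR K a s1 -> has_sumR K a s2 -> s1 = s2.
Proof.
move=> h1 h2; apply/eqP; rewrite -subr_eq0 -normr_le0; apply/ler_addgt0Pr => e e_gt0.
have e2_gt0 : 0 < e / 2 by rewrite divr_gt0.
have [F1 [K1 H1]] := h1 _ e2_gt0; have [F2 [K2 H2]] := h2 _ e2_gt0.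
have [F [uF KF sF1 sF2]] := common_refinement K1 K2.
rewrite add0r (splitr e) (le_trans (ler_distD (\sum_(j <- F) a j) _ _)) //.
by rewrite distrC ltW // ltrD ?H1 ?H2.
Qed.

Lemma sumR_eq (R : realType) K (a : int -> R) s : has_sumR K a s -> sumR K a = s.
Proof.
move=> hs; rewrite /sumR; case: excluded_middle_informative => [ex|]; last first.
  by case; exists s.
by case: constructive_indefinite_description => t ht /=; apply: has_sumR_unique ht hs.
Qed.

Section LinearMaps.
Variables (K : pzRingType) (U W : lmodType K) (T : U -> W).
Hypothesis linT : forall a x y, T (a *: x + y) = a *: T x + T y.

Lemma lin0 : T 0 = 0.
Proof.
have := linT 1 0 0; rewrite scale1r addr0 scale1r => T0D.
by apply: (@addrI _ (T 0)); rewrite addr0 -T0D.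
Qed.

Lemma linD x y : T (x + y) = T x + T y.
Proof. by rewrite -[x]scale1r linT !scale1r. Qed.

Lemma linZ a x : T (a *: x) = a *: T x.
Proof. by rewrite -[a *: x]addr0 linT lin0 addr0. Qed.

End LinearMaps.

Section Operators.
Variable R : realType.
Local Notation C := (complex R).
Variables (V : lmodType C) (ip : V -> V -> C).
Hypothesis hip : is_inner_product ip.

Lemma orth_proj0 W P : is_orth_proj ip W P -> P 0 = 0.
Proof.
move=> hP; have [WP0 perp] := hP 0; apply: (ip_eq0 hip).
by apply/eqP; rewrite -oppr_eq0 -(ipNl hip) -sub0r perp.
Qed.

Lemma orth_proj_sym W P w f : is_orth_proj ip W P -> ip (P w) f = ip w (P f).
Proof.
move=> hP; have [Wf perp_f] := hP f; have [Ww perp_w] := hP w.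
rewrite -[f in LHS](subrK (P f)) -[w in RHS](subrK (P w)) (ipDr hip) (ipDl hip).
by rewrite (ipC hip) perp_f // perp_w // conjc0.
Qed.

Lemma adjoint0 (V' : lmodType C) (ip' : V' -> V' -> C) (T : V -> V') Ts :
  is_inner_product ip' -> is_adjoint ip ip' T Ts -> Ts 0 = 0.
Proof. by move=> hip' adj; apply: (ip_eq0 hip); rewrite -adj (ip0r hip'). Qed.

Section PositiveOperator.
Variable Q : V -> V.
Hypothesis linQ : forall a x y, Q (a *: x + y) = a *: Q x + Q y.
Hypothesis posQ : positive_op ip Q.

Lemma positive_op_Re_sym x y : complex.Re (ip (Q x) y) = complex.Re (ip x (Q y)).
Proof.
have Im_iM (w : C) : complex.Im ('i%C * w) = complex.Re w.
  by case: w => ? ? /=; rewrite !mul0r !mul1r add0r.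
have Im_conjiM (w : C) : complex.Im (conjc 'i%C * w) = - complex.Re w.
  by case: w => ? ? /=; rewrite !mul0r add0r mulN1r.
have Im_iconjiM (w : C) : complex.Im ('i%C * (conjc 'i%C * w)) = complex.Im w.
  by case: w => ? ? /=; ring.
(* Polarization: Im <Q z, z> = 0 for z = x + i y. *)
have := ger0_Im (posQ (x + 'i%C *: y)).
rewrite (linD linQ) (linZ linQ) !(ipDl hip) !(ipDr hip) !(ipZl hip) !(ipZr hip).
rewrite !raddfD /= Im_iM Im_conjiM Im_iconjiM !ger0_Im ?posQ // (Re_ipC hip x).
lra.
Qed.

Lemma positive_sqrt_split (Qi : V -> V) x y f :
  cancel Q Qi -> cancel Qi Q -> Q (Q f) = x + y ->
  complex.Re (ip x f) + hnorm ip (Qi y) ^+ 2 =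
  complex.Re (ip y f) + hnorm ip (Qi x) ^+ 2.
Proof.
move=> QK QiK QQf; set p := Qi x; set q := Qi y.
have Qf : Q f = p + q by rewrite -[Q f]QK QQf -(QiK x) -(QiK y) -(linD linQ) QK.
have Re_ipf z :
    complex.Re (ip z f) = complex.Re (ip (Qi z) p) + complex.Re (ip (Qi z) q).
  by rewrite -{1}(QiK z) positive_op_Re_sym Qf (ipDr hip) raddfD.
rewrite !Re_ipf !(hnorm_sqr hip) (Re_ipC hip q p).
lra.
Qed.

End PositiveOperator.
End Operators.

Section GFusion.
Variable R : realType.
Local Notation C := (complex R).
Variables (H : lmodType C) (ipH : H -> H -> C) (Hj : int -> lmodType C)
  (ipj : forall j, Hj j -> Hj j -> C) (J : int -> Prop) (W : int -> H -> Prop)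
  (P : int -> H -> H) (L : forall j, H -> Hj j) (Ls : forall j, Hj j -> H)
  (v : int -> R).
Hypothesis hipH : is_inner_product ipH.
Hypothesis hipj : forall j, J j -> is_inner_product (@ipj j).
Hypothesis hP : forall j, J j -> is_orth_proj ipH (W j) (P j).
Hypothesis hadj : forall j, J j -> is_adjoint ipH (@ipj j) (L j) (@Ls j).

Definition gfusion_term (f : H) (j : int) : H :=
  ((v j ^+ 2)%:C)%C *: P j (Ls (L j (P j f))).

Definition gfusion_coeff (f : H) (j : int) : R :=
  v j ^+ 2 * hnorm (@ipj j) (L j (P j f)) ^+ 2.

Lemma ip_gfusion_term f j :
  J j -> ipH (gfusion_term f j) f = ((gfusion_coeff f j)%:C)%C.
Proof.
move=> Jj; rewrite (ipZl hipH) (orth_proj_sym hipH _ _ (hP Jj)) (ipC hipH) -hadj //.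
by rewrite (ipxxE (hipj Jj)) conjc_real -rmorphM.
Qed.

Lemma has_sumR_gfusion_coeff K f x :
  (forall j, K j -> J j) -> has_sumV ipH K (gfusion_term f) x ->
  has_sumR K (gfusion_coeff f) (complex.Re (ipH x f)).
Proof.
move=> KJ hx e e_gt0.
have nf1_gt0 : 0 < hnorm ipH f + 1 by rewrite ltr_wpDl ?hnorm_ge0.
have [F0 [K0 H0]] := hx _ (divr_gt0 e_gt0 nf1_gt0); exists F0; split => // F uF KF sF.
have -> : \sum_(j <- F) gfusion_coeff f j - complex.Re (ipH x f) =
    complex.Re (ipH (\sum_(j <- F) gfusion_term f j - x) f).
  rewrite (ipBl hipH) (ip_suml hipH) raddfB raddf_sum /=; congr (_ - _).
  by apply: eq_big_seq => j /KF/KJ Jj; rewrite ip_gfusion_term.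
rewrite (le_lt_trans (normr_Re_ip_le_hnormM hipH _ _)) //.
have nf_le : hnorm ipH f <= hnorm ipH f + 1 by rewrite lerDl.
apply: le_lt_trans (ler_wpM2l (hnorm_ge0 _ _) nf_le) _.
by rewrite -ltr_pdivlMr // H0.
Qed.

Hypothesis linL : forall j, J j -> forall a x y, L j (a *: x + y) = a *: L j x + L j y.

Lemma gfusion_term0 j : J j -> gfusion_term 0 j = 0.
Proof.
move=> Jj; rewrite /gfusion_term (orth_proj0 hipH (hP Jj)) (lin0 (linL Jj)).
by rewrite (adjoint0 hipH (hipj Jj) (hadj Jj)) (orth_proj0 hipH (hP Jj)) scaler0.
Qed.

(* A divergent sum has the junk value 0, so injectivity of S_J forces convergence. *)
Lemma gfusion_summable :
  (forall g, S_K ipH P L Ls v J g = 0 -> g = 0) ->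
  forall g, exists s, has_sumV ipH J (gfusion_term g) s.
Proof.
move=> S_inj g; have [//|diverges] := EM (exists s, has_sumV ipH J (gfusion_term g) s).
have g0 : g = 0 by apply: S_inj; apply: sumV_not_summable.
by case: diverges; exists 0; rewrite g0; apply: (has_sumV_eq0 hipH) => j /gfusion_term0.
Qed.

End GFusion.

Theorem theorem3p3
  (R : realType)
  (H : lmodType (complex R)) (ipH : H -> H -> complex R)
  (Hj : int -> lmodType (complex R))
  (ipj : forall j : int, Hj j -> Hj j -> complex R)
  (J : int -> Prop)
  (W : int -> H -> Prop) (P : int -> H -> H)
  (L : forall j : int, H -> Hj j) (Ls : forall j : int, Hj j -> H)
  (v : int -> R)
  (Q Qi : H -> H)
  (I : int -> Prop) :
  (* H and the H_j are separable Hilbert spaces *)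
  separable_hilbert ipH ->
  (forall j, J j -> separable_hilbert (@ipj j)) ->
  (* W_j closed subspaces, P j = pi_{W_j}; Lambda_j bounded, Ls j = Lambda_j^*;
     v_j > 0 *)
  (forall j, J j -> closed_subspace ipH (W j)) ->
  (forall j, J j -> is_orth_proj ipH (W j) (P j)) ->
  (forall j, J j -> bounded_linear ipH (@ipj j) (L j)) ->
  (forall j, J j -> is_adjoint ipH (@ipj j) (L j) (@Ls j)) ->
  (forall j, J j -> 0 < v j) ->
  (* Lambda = (W_j, Lambda_j, v_j) is a g-fusion frame for H *)
  gfusion_frame ipH ipj J P L v ->
  (* Q = S_Lambda^{1/2}: the positive (bounded) square root of S_Lambda *)
  bounded_linear ipH ipH Q ->
  positive_op ipH Q ->
  (forall f, Q (Q f) = S_K ipH P L Ls v J f) ->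
  (* Qi = S_Lambda^{-1/2}, the inverse of Q *)
  (forall f, Qi (Q f) = f) -> (forall f, Q (Qi f) = f) ->
  (* I is a subset of J *)
  (forall j, I j -> J j) ->
  let Ic := fun j => J j /\ ~ I j in
  forall f : H,
    sumR I (fun j => v j ^+ 2 * hnorm (@ipj j) (L j (P j f)) ^+ 2)
      + hnorm ipH (Qi (S_K ipH P L Ls v Ic f)) ^+ 2
    = sumR Ic (fun j => v j ^+ 2 * hnorm (@ipj j) (L j (P j f)) ^+ 2)
      + hnorm ipH (Qi (S_K ipH P L Ls v I f)) ^+ 2.
Proof.
move=> [hipH hcomp _] hHj _ hP hL hadj _ _ [linQ _] posQ QQ QiK QKi IJ Ic f.
have hipj j : J j -> is_inner_product (@ipj j) by case/hHj.
have linL j : J j -> forall a x y, L j (a *: x + y) = a *: L j x + L j y.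
  by case/hL.
have S_inj g : S_K ipH P L Ls v J g = 0 -> g = 0.
  have Qi0 : Qi 0 = 0 by rewrite -{1}(lin0 linQ) QiK.
  by move=> Sg0; rewrite -(QiK g) -(QiK (Q g)) QQ Sg0 !Qi0.
have [s hs] := gfusion_summable hipH hipj hP hadj linL S_inj f.
have [x hx] := has_sumV_sub hipH hcomp IJ hs.
have IcJ j : Ic j -> J j by case.
have [y hy] := has_sumV_sub hipH hcomp IcJ hs.
have hxy : has_sumV ipH J (gfusion_term P L Ls v f) (x + y).
  apply: (has_sumV_union hipH _ _ hx hy) => [j|j Ij [] //]; split => [Jj|[/IJ //|[]//]].
  by have [Ij|nIj] := EM (I j); [left | right].
rewrite /S_K (sumV_eq hipH hx) (sumV_eq hipH hy).
rewrite (sumR_eq (has_sumR_gfusion_coeff hipH hipj hP hadj IJ hx)).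
rewrite (sumR_eq (has_sumR_gfusion_coeff hipH hipj hP hadj IcJ hy)).
apply: (positive_sqrt_split hipH linQ posQ QiK QKi).
by rewrite QQ /S_K (sumV_eq hipH hxy).
Qed.
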